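(* Let $f,g\in\mathbb L^2([0,1])$ with $\Delta=\|f-g\|>0$, and let $X$ be distributed according to the model below. Then for all $\epsilon<1/4$, \[ \mathbb P\Big(\big|\eta(X)-\tfrac12\big|\le\epsilon\Big)\ge(2\pi)^{-1/2}\Big[\frac\epsilon\Delta e^{-(1+\Delta/2)^2/2}\wedge\frac{e^{-1/2}}2\Big]. \]
   Context: Model: $Y\sim\mathrm{Bernoulli}(1/2)$ independent of a standard Brownian motion $W$ on $[0,1]$, and $dX(t)=Yf(t)\,dt+(1-Y)g(t)\,dt+dW(t)$. Regression function $\eta(X)=\mathbb P(Y=1\mid X)=\dfrac{\exp(\int_0^1(f-g)\,dX-\frac12\|f\|^2+\frac12\|g\|^2)}{1+\exp(\int_0^1(f-g)\,dX-\frac12\|f\|^2+\frac12\|g\|^2)}$. $\|\cdot\|$ is the $\mathbb L^2([0,1])$ norm; $a\wedge b=\min\{a,b\}$. *)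

From HB Require Import structures.
From mathcomp Require Import all_boot all_order all_algebra.
From mathcomp Require Import all_classical all_reals all_analysis.
Set Implicit Arguments. Unset Strict Implicit. Unset Printing Implicit Defensive.
Import Order.TTheory GRing.Theory Num.Theory.
Local Open Scope classical_set_scope.
Local Open Scope ring_scope.

Section defs.
Variable R : realType.

Definition L2_01 (h : R -> R) : Prop :=
  measurable_fun `[(0:R), (1:R)] h /\
  (lebesgue_measure).-integrable `[(0:R), (1:R)] (fun t => ((h t) ^+ 2)%:E).

Definition ip01 (h k : R -> R) : R :=
  Rintegral lebesgue_measure `[(0:R), (1:R)] (fun t => h t * k t).
Definition norm01 (h : R -> R) : R := Num.sqrt (ip01 h h).

Variables (d : measure_display) (T : measurableType d) (P : probability T R).

Definition centered_gaussian (Z : T -> R) (s : R) : Prop :=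
  measurable_fun setT Z /\
  forall B : set R, measurable B ->
    P (Z @^-1` B) = (if s == 0 then \d_(0:R) B else normal_prob (0:R) s B).

Definition indep_rv (X Z : T -> R) : Prop :=
  forall A B : set R, measurable A -> measurable B ->
    P (X @^-1` A `&` Z @^-1` B) = (P (X @^-1` A) * P (Z @^-1` B))%E.

(* Wiener integral of a standard Brownian motion on [0,1]:
   W h = \int_0^1 h dW, i.e. an isonormal Gaussian process on L^2([0,1]). *)
Definition wiener_integral (W : (R -> R) -> T -> R) : Prop :=
  (forall h, L2_01 h -> centered_gaussian (W h) (norm01 h)) /\
  (forall h k (a b : R), L2_01 h -> L2_01 k ->
     {ae P, forall w, W (fun t => a * h t + b * k t) w = a * W h w + b * W k w}).

Definition bernoulli_half (Y : T -> R) : Prop :=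
  measurable_fun setT Y /\ (forall w, Y w = 0 \/ Y w = 1) /\
  P (Y @^-1` [set 1%R]) = (2^-1)%:E.

(* \int_0^1 h dX for dX = (Y f + (1-Y) g) dt + dW *)
Definition int_dX (f g : R -> R) (Y : T -> R) (W : (R -> R) -> T -> R)
  (h : R -> R) (w : T) : R :=
  Y w * ip01 h f + (1 - Y w) * ip01 h g + W h w.

Definition eta_reg (f g : R -> R) (Y : T -> R) (W : (R -> R) -> T -> R) (w : T) : R :=
  let S := int_dX f g Y W (fun t => f t - g t) w
           - 2^-1 * norm01 f ^+ 2 + 2^-1 * norm01 g ^+ 2 in
  expR S / (1 + expR S).

End defs.

From HB Require Import structures.
From mathcomp Require Import all_boot all_order all_algebra.
From mathcomp Require Import all_classical all_reals all_analysis.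
From mathcomp Require Import ring lra measurable_realfun.
Import Order.TTheory GRing.Theory Num.Theory numFieldNormedType.Exports.
Set Implicit Arguments. Unset Strict Implicit.
Local Open Scope classical_set_scope.
Local Open Scope ring_scope.

(* On the event {Y = 1} the log-likelihood ratio
   int (f - g) dX - |f|^2/2 + |g|^2/2 equals Delta^2/2 + Z, where
   Z = int (f - g) dW ~ N(0, Delta^2) is independent of Y, and the logistic
   function satisfies |sigma(s) - 1/2| <= |s|/2.  Hence for w = min(eps, Delta)
   the event {Y = 1, |Z + Delta^2/2| <= w} forces |eta(X) - 1/2| <= eps.  Its
   probability is at least 1/2 * 2w times the minimum of the N(0, Delta^2)
   density over that interval, i.e. w / (Delta sqrt(2 pi)) e^{-(1+Delta/2)^2/2}.
   If eps <= Delta this is the first term of the minimum; if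
   Delta < eps < 1/4 it is at least e^{-1/2} / (2 sqrt(2 pi)). *)

Section L2_unit_interval.
Variable R : realType.
Notation mu := (@lebesgue_measure R).

Lemma L2_01_integrable_mul (f g : R -> R) : L2_01 f -> L2_01 g ->
  mu.-integrable `[0, 1] (EFin \o (fun t => f t * g t)).
Proof.
move=> [mf If] [mg Ig].
apply: le_integrable (integrableD _ If Ig) => //.
- by apply/measurable_EFinP; apply: measurable_funM.
- move=> t _ /=; rewrite lee_fin [leRHS]ger0_norm ?addr_ge0 ?sqr_ge0//.
  rewrite ler_norml; apply/andP; split; nra.
Qed.

Lemma L2_01B (f g : R -> R) : L2_01 f -> L2_01 g -> L2_01 (fun t => f t - g t).
Proof.
move=> [mf If] [mg Ig]; split; first exact: measurable_funB.
apply: le_integrable (integrableD _ (integrableZl _ 2 If) (integrableZl _ 2 Ig)) => //.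
- by apply/measurable_EFinP; apply/measurable_funX/measurable_funB.
- move=> t _ /=; rewrite lee_fin ger0_norm ?sqr_ge0// ger0_norm; last by nra.
  have := sqr_ge0 (f t + g t); rewrite !expr2; nra.
Qed.

Lemma ip01C (f g : R -> R) : ip01 f g = ip01 g f.
Proof. by apply: eq_Rintegral => x _; rewrite mulrC. Qed.

Lemma ip01Bl (f g k : R -> R) : L2_01 f -> L2_01 g -> L2_01 k ->
  ip01 (fun t => f t - g t) k = ip01 f k - ip01 g k.
Proof.
move=> Lf Lg Lk; rewrite /ip01 -RintegralB ?L2_01_integrable_mul//.
by apply: eq_Rintegral => x _; rewrite mulrBl.
Qed.

Lemma norm01_sqr (f : R -> R) : norm01 f ^+ 2 = ip01 f f.
Proof. by rewrite sqr_sqrtr// Rintegral_ge0// => x _; rewrite -expr2 sqr_ge0. Qed.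

Lemma ip01B_half_norm01 (f g : R -> R) : L2_01 f -> L2_01 g ->
  ip01 (fun t => f t - g t) f - 2^-1 * norm01 f ^+ 2 + 2^-1 * norm01 g ^+ 2
  = 2^-1 * norm01 (fun t => f t - g t) ^+ 2.
Proof.
move=> Lf Lg; have Lfg := L2_01B Lf Lg.
have ipf := ip01Bl Lf Lg Lf; have ipg := ip01Bl Lf Lg Lg.
have := ip01Bl Lf Lg Lfg; rewrite (ip01C f) (ip01C g) ipf ipg => ipfg.
by rewrite !norm01_sqr ipfg (ip01C g f); lra.
Qed.

End L2_unit_interval.

Section logistic.
Context {R : realType}.

Definition logistic (x : R) : R := expR x / (1 + expR x).

Lemma continuous_logistic : continuous logistic.
Proof.
move=> x; apply: cvgM; first exact: continuous_expR.
apply: cvgV; first by rewrite gt_eqF // ltr_pwDl // expR_gt0.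
apply: cvgD; [exact: cvg_cst | exact: continuous_expR].
Qed.

Lemma logistic_dist_half (s : R) : `|logistic s - 2^-1| <= `|s| / 2.
Proof.
have E0 := expR_gt0 s.
have ge1D := expR_ge1Dx s.
have le1 : expR s * (1 - s) <= 1.
  have := expR_ge1Dx (- s); rewrite expRN => h.
  by rewrite -[leRHS](mulfV (lt0r_neq0 E0)) ler_pM2l.
have ls : logistic s * (1 + expR s) = expR s by rewrite mulfVK // gt_eqF // ltr_pwDl.
rewrite ler_norml; have [s0|s0] := leP 0 s.
  by rewrite ger0_norm //; apply/andP; split; nra.
by rewrite ltr0_norm //; apply/andP; split; nra.
Qed.

End logistic.

Section gaussian_lower_bound.
Variable R : realType.
Notation mu := (@lebesgue_measure R).

Lemma normal_peakE (s : R) : 0 < s -> normal_peak s = (s * Num.sqrt (pi *+ 2))^-1.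
Proof.
by move=> s0; rewrite /normal_peak -mulrnAr sqrtrM ?sqr_ge0 // sqrtr_sqr gtr0_norm.
Qed.

Lemma normal_pdf_ge (s K x : R) : s != 0 -> `|x| <= K ->
  normal_peak s * expR (- K ^+ 2 / (s ^+ 2 *+ 2)) <= normal_pdf 0 s x.
Proof.
move=> s0 xK; rewrite normal_pdfE // ler_wpM2l ?normal_peak_ge0 //.
rewrite /normal_fun ler_expR subr0 !mulNr lerN2 ler_pM2r; last first.
  by rewrite invr_gt0 pmulrn_lgt0 // exprn_even_gt0.
by rewrite -real_normK ?num_real // lerXn2r ?nnegrE // (le_trans _ xK).
Qed.

Lemma normal_prob_itv_ge (s c w K : R) : 0 < s -> 0 <= w -> `|c| + w <= K ->
  ((w *+ 2 * (normal_peak s * expR (- K ^+ 2 / (s ^+ 2 *+ 2))))%:E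
    <= normal_prob 0 s `[(c - w)%R, (c + w)%R])%E.
Proof.
move=> s0 w0 cK; set k := normal_peak s * _.
have k0 : 0 <= k by rewrite mulr_ge0 ?normal_peak_ge0 ?expR_ge0.
apply: (@le_trans _ _ (\int[mu]_(x in `[(c - w)%R, (c + w)%R]) (cst k%:E) x)%E).
  rewrite integral_cst //= lebesgue_measure_itv /= lte_fin.
  case: ifPn => [_|]; first by rewrite -EFinD -EFinM lee_fin mulrC ler_wpM2l //; lra.
  by rewrite -leNgt mule0 lee_fin => ?; rewrite (_ : w = 0) ?mul0rn ?mul0r //; lra.
apply: ge0_le_integral => //.
- by apply/measurable_EFinP/measurable_funTS; exact: measurable_normal_pdf.
- move=> x; rewrite /= in_itv /= => /andP [cx xc]; rewrite lee_fin.
  apply: normal_pdf_ge; first exact: lt0r_neq0.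
  apply: le_trans cK; rewrite ler_norml; apply/andP; split.
  + have := ler_norm (- c); rewrite normrN; lra.
  + have := ler_norm c; lra.
Qed.

End gaussian_lower_bound.

Section model.
Variables (R : realType) (d : measure_display) (T : measurableType d).
Variables (P : probability T R) (f g : R -> R) (Y : T -> R).
Variable W : (R -> R) -> T -> R.
Hypotheses (Lf : L2_01 f) (Lg : L2_01 g).
Hypothesis Delta_gt0 : 0 < norm01 (fun t => f t - g t).
Hypotheses (HY : bernoulli_half P Y) (HW : wiener_integral P W).
Hypothesis indep : forall h, L2_01 h -> indep_rv P Y (W h).

Local Notation Delta := (norm01 (fun t => f t - g t)).
Local Notation Z := (W (fun t => f t - g t)).

Lemma eta_regE_Y1 (x : T) : Y x = 1 ->
  eta_reg f g Y W x = logistic (2^-1 * Delta ^+ 2 + Z x).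
Proof.
move=> Yx; rewrite /eta_reg /int_dX Yx mul1r subrr mul0r addr0 /=.
by rewrite -(ip01B_half_norm01 Lf Lg) /logistic; congr (expR _ / (1 + expR _)); ring.
Qed.

Lemma measurable_eta_reg : measurable_fun setT Y -> measurable_fun setT Z ->
  measurable_fun setT (eta_reg f g Y W).
Proof.
move=> mY mZ.
apply: (measurableT_comp (continuous_measurable_fun (@continuous_logistic R))).
rewrite /int_dX; apply: measurable_funD => //; apply: measurable_funB => //.
apply: measurable_funD => //; apply: measurable_funD; apply: measurable_funM => //.
exact: measurable_funB.
Qed.

Lemma measurable_eta_reg_near_half (eps : R) :
  measurable_fun setT Y -> measurable_fun setT Z ->
  measurable [set x | `|eta_reg f g Y W x - 2^-1| <= eps].
Proof.
move=> mY mZ.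
have -> : [set x | `|eta_reg f g Y W x - 2^-1| <= eps] =
    eta_reg f g Y W @^-1` `[2^-1 - eps, 2^-1 + eps].
  by apply/seteqP; split => x; rewrite /= in_itv /= ler_distl.
by rewrite -[X in measurable X]setTI; apply: measurable_eta_reg.
Qed.

Lemma prob_Y1_Z_in (B : set R) : measurable B ->
  P (Y @^-1` [set 1] `&` Z @^-1` B) = ((2^-1)%:E * normal_prob 0 Delta B)%E.
Proof.
move=> mB; case: HY => _ [_ PY1]; have [_ PZ] := HW.1 _ (L2_01B Lf Lg).
by rewrite indep ?PY1 ?PZ ?(gt_eqF Delta_gt0) //; apply: L2_01B.
Qed.

Lemma prob_eta_reg_near_half_ge (eps w : R) : 0 < w -> w <= eps ->
  ((2^-1)%:E * normal_prob 0 Delta `[(- (Delta ^+ 2 / 2) - w)%R, (- (Delta ^+ 2 / 2) + w)%R]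
   <= P [set x | (`|eta_reg f g Y W x - 2^-1| <= eps)%R])%E.
Proof.
move=> w_gt0 w_le; case: HY => mY _; have [mZ _] := HW.1 _ (L2_01B Lf Lg).
rewrite -prob_Y1_Z_in; last exact: measurable_itv.
apply: le_measure; rewrite ?inE.
- apply: measurableI; rewrite -[X in measurable X]setTI; first exact: mY.
  by apply: mZ => //; exact: measurable_itv.
- exact: measurable_eta_reg_near_half.
- move=> x [/= Yx]; rewrite in_itv /= => /andP [lbZ ubZ].
  rewrite eta_regE_Y1 //; apply: le_trans (logistic_dist_half _) _.
  have : `|2^-1 * Delta ^+ 2 + Z x| <= w by rewrite ler_norml; lra.
  lra.
Qed.

End model.

Section lower_bound_constants.
Variable R : realType.

Lemma normal_itv_massE (s w : R) : 0 < s ->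
  2^-1 * (w *+ 2 * (normal_peak s * expR (- (s ^+ 2 / 2 + s) ^+ 2 / (s ^+ 2 *+ 2))))
  = (Num.sqrt (pi *+ 2))^-1 * (w / s * expR (- (1 + s / 2) ^+ 2 / 2)).
Proof.
move=> s_gt0; have s_neq0 := lt0r_neq0 s_gt0.
have sqrt2pi_neq0 : Num.sqrt (pi *+ 2) != 0 :> R.
  by rewrite lt0r_neq0 // sqrtr_gt0 pmulrn_lgt0 // pi_gt0.
have -> : - (s ^+ 2 / 2 + s) ^+ 2 / (s ^+ 2 *+ 2) = - (1 + s / 2) ^+ 2 / 2.
  by field.
by rewrite normal_peakE //; field; rewrite ?s_neq0 ?sqrt2pi_neq0.
Qed.

Lemma expR_half_le_shift (s : R) : 0 <= s -> s <= 2^-1 ->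
  expR (- 2^-1) / 2 <= expR (- (1 + s / 2) ^+ 2 / 2).
Proof.
move=> s_ge0 s_le.
have -> : - (1 + s / 2) ^+ 2 / 2 = - 2^-1 + - ((s + s ^+ 2 / 4) / 2) by field.
rewrite expRD ler_pM2l ?expR_gt0 //; apply: le_trans (expR_ge1Dx _).
have : s ^+ 2 <= s by rewrite expr2 ler_piMr //; lra.
lra.
Qed.

Lemma min_rate_le (s e : R) : 0 < s -> 0 < e -> e < 4^-1 ->
  Num.min (e / s * expR (- (1 + s / 2) ^+ 2 / 2)) (expR (- 2^-1) / 2)
  <= Num.min e s / s * expR (- (1 + s / 2) ^+ 2 / 2).
Proof.
move=> s_gt0 e_gt0 e_lt.
rewrite ge_min; case: (leP e s) => [_|s_lt]; first by rewrite lexx.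
rewrite divff ?lt0r_neq0 // mul1r expR_half_le_shift ?orbT //; lra.
Qed.

End lower_bound_constants.

Theorem proposition4 (R : realType) (d : measure_display) (T : measurableType d)
  (P : probability T R) (f g : R -> R) (Y : T -> R) (W : (R -> R) -> T -> R) :
  L2_01 f -> L2_01 g ->
  0 < norm01 (fun t => f t - g t) ->
  bernoulli_half P Y ->
  wiener_integral P W ->
  (forall h, L2_01 h -> indep_rv P Y (W h)) ->
  forall eps : R, eps < 4^-1 ->
  let Delta := norm01 (fun t => f t - g t) in
  (((Num.sqrt (pi *+ 2))^-1 *
     Num.min (eps / Delta * expR (- (1 + Delta / 2) ^+ 2 / 2))
             (expR (- 2^-1) / 2))%:E
   <= P [set w | (`|eta_reg f g Y W w - 2^-1| <= eps)%R])%E.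
Proof.
move=> Lf Lg Delta_gt0 HY HW indep eps eps_lt /=; set Delta := norm01 _.
have [eps_le0|eps_gt0] := leP eps 0.
  apply: le_trans (measure_ge0 _ _); rewrite lee_fin.
  rewrite mulr_ge0_le0 ?invr_ge0 ?sqrtr_ge0 // ge_min.
  by rewrite pmulr_lle0 ?expR_gt0 // pmulr_lle0 ?invr_gt0 // eps_le0.
set w := Num.min eps Delta.
have w_gt0 : 0 < w by rewrite lt_min eps_gt0.
have w_le : w <= eps by rewrite ge_min lexx.
have cK : `|- (Delta ^+ 2 / 2)| + w <= Delta ^+ 2 / 2 + Delta.
  by rewrite normrN ger0_norm ?divr_ge0 ?sqr_ge0 // lerD2l ge_min lexx orbT.
apply: le_trans (prob_eta_reg_near_half_ge Lf Lg Delta_gt0 HY HW indep w_gt0 w_le).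
apply: le_trans (lee_wpmul2l _ (normal_prob_itv_ge Delta_gt0 (ltW w_gt0) cK)).
  rewrite -EFinM lee_fin normal_itv_massE // ler_wpM2l ?invr_ge0 ?sqrtr_ge0 //.
  exact: min_rate_le.
by rewrite lee_fin invr_ge0.
Qed.
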